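(* Let $(X,d_X,m_X)$, $(Y,d_Y,m_Y)$ be metric measure spaces and $p:X\to Y$ a 1-Lipschitz map with $p_*m_X=m_Y$, and let $\{\mu_y\}_{y\in Y}$ be a disintegration of $m_X$ for $p$. Assume there is a Borel set $\Omega\subset Y$ with $m_Y(Y\setminus\Omega)=0$ such that $W_2(\mu_y,\mu_{y'})=d_Y(y,y')$ for all $y,y'\in\Omega$. Let $y_0,y_1\in Y$ satisfy $W_2(\mu_{y_0},\mu_{y_1})=d_Y(y_0,y_1)$ and $p_*\mu_{y_i}=\delta_{y_i}$ for $i=0,1$. Then every optimal transport plan for $W_2(\mu_{y_0},\mu_{y_1})$ is concentrated on $\{(x,x')\in p^{-1}(y_0)\times p^{-1}(y_1): d_X(x,x')=d_Y(y_0,y_1)\}$.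
   Context: A metric measure space $(X,d,m)$: complete separable metric space with Borel measure satisfying $0<m(B_r(x))<\infty$ for all $x$, $r>0$. A disintegration of $m_X$ for $p$ is a family $\{\mu_y\}_{y\in Y}$ of Borel probability measures on $X$ such that $y\mapsto\mu_y(A)$ is Borel for all Borel $A$, $\mu_y(X\setminus p^{-1}(y))=0$ for $m_Y$-a.e. $y$, and $\int_Xf\,dm_X=\int_Y\int_Xf\,d\mu_y\,dm_Y(y)$ for every Borel $f:X\to[0,\infty]$. $W_2$ is the quadratic Wasserstein distance (possibly $+\infty$). *)

From HB Require Import structures.
From mathcomp Require Import all_boot all_order all_algebra.
From mathcomp Require Import all_classical all_reals all_analysis.
From mathcomp Require Import measurable_realfun.
Set Implicit Arguments. Unset Strict Implicit. Unset Printing Implicit Defensive.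
Import Order.TTheory GRing.Theory Num.Theory.
Local Open Scope classical_set_scope.
Local Open Scope ring_scope.

Section MetricDefs.
Context {R : realType} {T : Type}.
Variable d : T -> T -> R.

Definition is_metric : Prop :=
  [/\ forall x y, 0 <= d x y,
      forall x y, d x y = 0 <-> x = y,
      forall x y, d x y = d y x &
      forall x y z, d x z <= d x y + d y z].

Definition dball (x : T) (r : R) : set T := [set y | d x y < r].

Definition dopen (A : set T) : Prop :=
  forall x, A x -> exists2 r : R, 0 < r & dball x r `<=` A.

Definition dcauchy (u : nat -> T) : Prop :=
  forall e : R, 0 < e -> exists N, forall n m, (N <= n)%N -> (N <= m)%N -> d (u n) (u m) < e.

Definition dcomplete : Prop :=
  forall u, dcauchy u -> exists l, forall e : R, 0 < e ->
     exists N, forall n, (N <= n)%N -> d (u n) l < e.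

Definition dseparable : Prop :=
  exists D : set T, countable D /\
    forall x (e : R), 0 < e -> exists2 z, D z & d x z < e.

Definition complete_separable_metric : Prop :=
  [/\ is_metric, dcomplete & dseparable].
End MetricDefs.

Notation borelT d := (g_sigma_algebraType (dopen d)).

Local Open Scope ereal_scope.

Definition mm_space {R : realType} {T : pointedType} (d : T -> T -> R)
  (m : {measure set (borelT d) -> \bar R}) : Prop :=
  complete_separable_metric d /\
  forall (x : borelT d) (r : R), (0 < r)%R ->
    0 < m (dball d x r) /\ m (dball d x r) < +oo.

Section Wasserstein.
Context {R : realType} {T : pointedType} (d : T -> T -> R).
Let X := borelT d.

Definition coupling (mu nu : {measure set X -> \bar R})
    (pi : probability (X * X)%type R) : Prop :=
  forall A : set X, measurable A ->
    pi (A `*` setT) = mu A /\ pi (setT `*` A) = nu A.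

Definition W2cost (mu nu : {measure set X -> \bar R})
    (pi : probability (X * X)%type R) : \bar R :=
  \int[pi]_z ((d z.1 z.2) ^+ 2)%:E.

(* inf of the quadratic cost over all couplings (+oo if there is none) *)
Definition W2sq (mu nu : {measure set X -> \bar R}) : \bar R :=
  ereal_inf [set W2cost mu nu pi | pi in [set pi | coupling mu nu pi]].

Definition W2 (mu nu : {measure set X -> \bar R}) : \bar R :=
  match W2sq mu nu with
  | r%:E => (Num.sqrt r)%:E
  | +oo => +oo
  | -oo => -oo (* impossible: the cost is nonnegative *)
  end.

Definition optimal_plan (mu nu : {measure set X -> \bar R})
    (pi : probability (X * X)%type R) : Prop :=
  coupling mu nu pi /\ W2cost mu nu pi = W2sq mu nu.

Definition concentrated_on (pi : probability (X * X)%type R)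
    (S : set (X * X)) : Prop :=
  exists N, [/\ measurable N, pi N = 0 & ~` S `<=` N].
End Wasserstein.

Definition disintegration {R : realType} {TX TY : pointedType}
  (dX : TX -> TX -> R) (dY : TY -> TY -> R)
  (mX : {measure set (borelT dX) -> \bar R})
  (mY : {measure set (borelT dY) -> \bar R})
  (p : borelT dX -> borelT dY) (mu : borelT dY -> probability (borelT dX) R)
  : Prop :=
  [/\ forall A : set (borelT dX), measurable A ->
        @measurable_fun _ _ (borelT dY) (\bar R) setT (fun y => mu y A),
      {ae mY, forall y, mu y (~` (p @^-1` [set y])) = 0} &
      forall f : borelT dX -> \bar R, measurable_fun setT f ->
        (forall x, 0 <= f x) ->
        \int[mX]_x f x = \int[mY]_y (\int[mu y]_x f x)].

From HB Require Import structures.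
From mathcomp Require Import all_boot all_order all_algebra.
From mathcomp Require Import all_classical all_reals all_analysis.
From mathcomp Require Import measurable_realfun lra.
Import Order.TTheory GRing.Theory Num.Theory.
Local Open Scope classical_set_scope.
Local Open Scope ring_scope.

(* Since p_* mu_{y_i} = delta_{y_i}, an optimal plan pi lives a.e. on
   p^-1(y0) x p^-1(y1), where p being 1-Lipschitz gives
   d_X(x, x')^2 >= d_Y(y0, y1)^2.  But the total cost of pi is
   W_2(mu_{y0}, mu_{y1})^2 = d_Y(y0, y1)^2, so this inequality must be an
   equality pi-a.e. *)

Section MetricBorel.
Context {R : realType} {T : pointedType} {d : T -> T -> R}.
Hypothesis d_metric : is_metric d.

Lemma measurable_set1_metric (y : borelT d) : measurable [set y].
Proof.
have [d_ge0 d_eq0 _ _] := d_metric.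
rewrite -[X in measurable X]setCK; apply: measurableC; apply: sub_sigma_algebra.
move=> x /= xy; exists (d x y).
  by rewrite lt_neqAle d_ge0 andbT eq_sym; apply/eqP => /d_eq0.
by move=> z; rewrite /dball /= => xz zy; rewrite zy ltxx in xz.
Qed.

Lemma measurable_dist_l (c : T) : measurable_fun [set: borelT d] (d ^~ c).
Proof.
have [_ _ dC dT] := d_metric.
apply: (measurability _ (RGenInftyO.measurableE R)) => //.
move=> _ [_ [a ->] <-]; apply: sub_sigma_algebra; rewrite setTI.
move=> x /=; rewrite in_itv /= => xa.
exists (a - d x c); first by rewrite subr_gt0.
move=> y; rewrite /dball /= in_itv /= => xy.
by have := dT y x c; rewrite (dC y x); lra.
Qed.

Lemma measurable_dist_r (c : T) : measurable_fun [set: borelT d] (d c).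
Proof.
have [_ _ dC _] := d_metric.
have -> : d c = d ^~ c by apply/funext => x; rewrite dC.
exact: measurable_dist_l.
Qed.

Lemma dseparable_seq : dseparable d ->
  exists e : nat -> T, forall x eps, 0 < eps -> exists n, d x (e n) < eps.
Proof.
move=> [D [/pcard_surjP [g g_onto] D_dense]].
exists g => x eps eps_gt0; have [z Dz xz] := D_dense x eps eps_gt0.
by have [n _ gnz] := g_onto z Dz; exists n; rewrite gnz.
Qed.

(* Each set of the union is measurable for the product sigma-algebra, being a
   sublevel set of a sum of functions of one coordinate each: this is where
   separability makes the distance jointly measurable. *)
Lemma dist_lt_bigcup (a : R) (e : nat -> T) :
  (forall x eps, 0 < eps -> exists n, d x (e n) < eps) ->
  [set z : T * T | d z.1 z.2 < a] =
  \bigcup_n [set z : T * T | d z.1 (e n) + d (e n) z.2 < a].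
Proof.
have [_ _ dC dT] := d_metric => e_dense.
apply/seteqP; split => [[x1 x2] /= lt_a|[x1 x2] [n _] /= lt_a].
  have [n xn] := e_dense x2 ((a - d x1 x2) / 2) ltac:(lra).
  exists n => //=.
  by have := dT x1 x2 (e n); have := dC x2 (e n); lra.
by have := dT x1 (e n) x2; lra.
Qed.

Lemma measurable_dist : dseparable d ->
  measurable_fun [set: borelT d * borelT d] (fun z => d z.1 z.2).
Proof.
move=> /dseparable_seq [e e_dense].
apply: (measurability _ (RGenInftyO.measurableE R)) => //.
move=> _ [_ [a ->] <-]; rewrite setTI.
have -> : (fun z : borelT d * borelT d => d z.1 z.2) @^-1` `]-oo, a[ =
    [set z | d z.1 z.2 < a].
  by apply/seteqP; split => z /=; rewrite in_itv.
rewrite (dist_lt_bigcup a _ e_dense); apply: bigcupT_measurable => n.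
pose f z := d z.1 (e n) + d (e n) z.2.
have mf : measurable_fun [set: borelT d * borelT d] f.
  apply: measurable_funD.
  - exact: measurableT_comp (measurable_dist_l (e n)) measurable_fst.
  - exact: (measurableT_comp (f := fun x : borelT d => d (e n) x) (g := snd)
      (measurable_dist_r (e n)) measurable_snd).
rewrite (_ : [set z | _] = setT `&` f @^-1` `]-oo, a[).
  exact: mf measurableT _ (measurable_itv _).
by rewrite setTI; apply/seteqP; split => z /=; rewrite in_itv.
Qed.

End MetricBorel.

Lemma measurable_nonexpanding {R : realType} {TX TY : pointedType}
    {dX : TX -> TX -> R} {dY : TY -> TY -> R} {p : borelT dX -> borelT dY} :
  (forall x x', dY (p x) (p x') <= dX x x') -> measurable_fun setT p.
Proof.
move=> p_lip.
have borelE : @measurable _ (borelT dY) = <<s dopen dY>> by [].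
apply: (measurability _ borelE).
move=> _ [A A_open <-]; apply: sub_sigma_algebra; rewrite setTI.
move=> x /= Apx; have [r r_gt0 ballA] := A_open _ Apx.
by exists r => // z xz; apply: ballA; exact: le_lt_trans (p_lip x z) xz.
Qed.

Section Couplings.
Context {R : realType} {T : pointedType} {d : T -> T -> R}.
Local Notation X := (borelT d).
Context {mu nu : measure X R} { pi : probability (X * X)%type R}.

Lemma coupling_ae_fst {A : set X} : coupling mu nu pi ->
  measurable A -> mu A = 1%E -> {ae pi, forall z, A z.1}.
Proof.
move=> cpl mA muA; exists (~` (A `*` setT)); split => //.
- by apply: measurableC; apply: measurableX.
- rewrite probability_setC; last exact: measurableX.
  by have [-> _] := cpl _ mA; rewrite muA subee.
- by move=> [z1 z2] /= notA [].
Qed.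

Lemma coupling_ae_snd {A : set X} : coupling mu nu pi ->
  measurable A -> nu A = 1%E -> {ae pi, forall z, A z.2}.
Proof.
move=> cpl mA nuA; exists (~` (setT `*` A)); split => //.
- by apply: measurableC; apply: measurableX.
- rewrite probability_setC; last exact: measurableX.
  by have [_ ->] := cpl _ mA; rewrite nuA subee.
- by move=> [z1 z2] /= notA [].
Qed.

Lemma optimal_plan_W2cost {r : R} : optimal_plan mu nu pi ->
  W2 mu nu = r%:E -> W2cost mu nu pi = (r ^+ 2)%:E.
Proof.
move=> [_ opt]; rewrite /W2 -opt.
have : (0 <= W2cost mu nu pi)%E.
  by apply: integral_ge0 => z _; rewrite lee_fin sqr_ge0.
by case: W2cost => [c| |] // c_ge0 [<-]; rewrite sqr_sqrtr.
Qed.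

Lemma ae_concentrated_on (S : set (X * X)%type) :
  {ae pi, forall z, S z} -> concentrated_on pi S.
Proof. by case=> N [mN piN SN]; exists N. Qed.

End Couplings.

(* The excess f - c is nonnegative a.e. and has zero integral; [0 <= c] keeps
   every integrand nonnegative, so that no integrability is needed. *)
Lemma ae_eq_cst_of_integral {dT : measure_display} {T : measurableType dT}
    {R : realType} {P : probability T R} {f : T -> R} {c : R} :
  0 <= c -> measurable_fun setT f -> {ae P, forall x, c <= f x} ->
  (\int[P]_x (f x)%:E = c%:E)%E -> {ae P, forall x, f x = c}.
Proof.
move=> c_ge0 mf f_ge intf.
pose g x := ((f x - c)%:E)%E.
have mg : measurable_fun setT g by apply/measurable_EFinP/measurable_funB.
have m_absg : measurable_fun setT (fun x => `|g x|%E).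
  by apply: measurableT_comp mg; exact: abse_measurable.
have int_split : (\int[P]_x (f x)%:E = \int[P]_x `|g x| + c%:E)%E.
  transitivity (\int[P]_x (`|g x| + c%:E))%E.
    apply: ae_eq_integral => //.
    - exact/measurable_EFinP.
    - exact: emeasurable_funD.
    apply: filterS f_ge => x cf _.
    by rewrite /g gee0_abs ?lee_fin ?subr_ge0 // -EFinD subrK.
  rewrite ge0_integralD // integral_cst //.
  set PT := (X in (_ * X)%E).
  have -> : PT = 1%E by exact: probability_setT.
  by rewrite mule1.
have int_absg0 : (\int[P]_x `|g x| = 0)%E.
  have : (0 <= \int[P]_x `|g x|)%E by apply: integral_ge0 => x _.
  move: int_split; rewrite intf.
  by case: (\int[P]_x `|g x|)%E => // r [] rc_eq_c _; congr EFin; lra.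
have := (ae_eq_integral_abs P measurableT mg).1 int_absg0.
by apply: filterS => x /(_ I) [] /eqP; rewrite subr_eq0 => /eqP.
Qed.

Theorem proposition3p10 (R : realType) (TX TY : pointedType)
  (dX : TX -> TX -> R) (dY : TY -> TY -> R)
  (mX : {measure set (borelT dX) -> \bar R})
  (mY : {measure set (borelT dY) -> \bar R})
  (p : borelT dX -> borelT dY)
  (mu : borelT dY -> probability (borelT dX) R)
  (Omega : set (borelT dY)) (y0 y1 : borelT dY) :
  mm_space mX -> mm_space mY ->
  (forall x x', dY (p x) (p x') <= dX x x') ->
  (forall B : set (borelT dY), measurable B -> mY B = mX (p @^-1` B)) ->
  disintegration mX mY p mu ->
  measurable Omega -> mY (~` Omega) = 0%E ->
  (forall y y', Omega y -> Omega y' -> W2 (mu y) (mu y') = (dY y y')%:E) ->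
  W2 (mu y0) (mu y1) = (dY y0 y1)%:E ->
  (forall B : set (borelT dY), measurable B -> mu y0 (p @^-1` B) = \d_y0 B) ->
  (forall B : set (borelT dY), measurable B -> mu y1 (p @^-1` B) = \d_y1 B) ->
  forall pi : probability (borelT dX * borelT dX)%type R,
    optimal_plan (mu y0) (mu y1) pi ->
    concentrated_on pi
      [set z | p z.1 = y0 /\ p z.2 = y1 /\ dX z.1 z.2 = dY y0 y1].
Proof.
move=> [[dX_metric _ dX_sep] _] [[dY_metric _ _] _] p_lip _ _ _ _ _ W01 py0 py1
  pi pi_opt.
have [pi_cpl _] := pi_opt.
have [dX_ge0 _ _ _] := dX_metric.
have [dY_ge0 _ _ _] := dY_metric.
have mp := measurable_nonexpanding p_lip.
have m_fibre y : measurable (p @^-1` [set y]).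
  rewrite -[X in measurable X]setTI.
  exact: mp measurableT _ (measurable_set1_metric dY_metric y).
have fibre_full y : (forall B : set (borelT dY), measurable B ->
    mu y (p @^-1` B) = \d_y B) -> mu y (p @^-1` [set y]) = 1%E.
  by move=> py; rewrite py ?diracE ?mem_set //; exact: measurable_set1_metric.
have on_fibre0 := coupling_ae_fst pi_cpl (m_fibre y0) (fibre_full y0 py0).
have on_fibre1 := coupling_ae_snd pi_cpl (m_fibre y1) (fibre_full y1 py1).
have cost := optimal_plan_W2cost pi_opt W01.
have cost_lb : {ae pi, forall z, dY y0 y1 ^+ 2 <= dX z.1 z.2 ^+ 2}.
  apply: filterS2 on_fibre0 on_fibre1 => z pz1 pz2.
  by have := p_lip z.1 z.2; rewrite pz1 pz2; apply: lerXn2r; rewrite ?nnegrE.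
have cost_eq := ae_eq_cst_of_integral (sqr_ge0 _)
  (measurable_funX 2 (measurable_dist dX_metric dX_sep)) cost_lb cost.
apply: ae_concentrated_on.
apply: filterS3 on_fibre0 on_fibre1 cost_eq => z pz1 pz2 /eqP.
by rewrite eqrXn2 // => /eqP.
Qed.
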